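(* Let $k\geq 1$ and let $a,b,\alpha,\beta$ be positive real numbers with $a\geq b$. Define \[ \theta(t)=\frac{(\alpha+\beta t)^{a-b}\, e^{t\left(\frac{ka\beta\gamma-b\beta\gamma}{k}\right)}\,\Gamma(\alpha+\beta t)^a}{k^{-\frac{b\beta t}{k}}\,\Gamma_k(\alpha+\beta t)^b},\qquad t\in(0,\infty). \] Then $\theta$ is increasing on $(0,\infty)$, and for every $t\in(0,1)$, \[ \frac{\alpha^{a-b}e^{-t\left(\frac{ka\beta\gamma-b\beta\gamma}{k}\right)}\,\Gamma(\alpha)^a}{(\alpha+\beta t)^{a-b}\,k^{\frac{b\beta t}{k}}\,\Gamma_k(\alpha)^b} \leq\frac{\Gamma(\alpha+\beta t)^a}{\Gamma_k(\alpha+\beta t)^b} \leq\frac{(\alpha+\beta)^{a-b}e^{(1-t)\left(\frac{ka\beta\gamma-b\beta\gamma}{k}\right)}\,\Gamma(\alpha+\beta)^a}{(\alpha+\beta t)^{a-b}\,k^{\frac{b\beta}{k}(t-1)}\,\Gamma_k(\alpha+\beta)^b}. \]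
   Context: $\Gamma$ is Euler's Gamma function and $\gamma$ is the Euler–Mascheroni constant. For $k>0$ and $t>0$, the $k$-Gamma function is $\Gamma_k(t)=\int_0^\infty e^{-x^k/k}x^{t-1}\,dx$. *)

From Stdlib Require Import Reals.
From Coquelicot Require Import Coquelicot.
Open Scope R_scope.

Definition Gamma (t : R) : R :=
  RInt_gen (fun x => exp (- x) * Rpower x (t - 1)) (at_right 0) (Rbar_locally p_infty).

Definition Gamma_k (k t : R) : R :=
  RInt_gen (fun x => exp (- (Rpower x k / k)) * Rpower x (t - 1))
    (at_right 0) (Rbar_locally p_infty).

Definition euler_gamma : R :=
  real (Lim_seq (fun n => sum_f_R0 (fun j => / INR (S j)) n - ln (INR (S n)))).

Definition theta (k a b alpha beta t : R) : R :=
  Rpower (alpha + beta * t) (a - b)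
  * exp (t * ((k * a * beta * euler_gamma - b * beta * euler_gamma) / k))
  * Rpower (Gamma (alpha + beta * t)) a
  / (Rpower k (- (b * beta * t / k)) * Rpower (Gamma_k k (alpha + beta * t)) b).

(* Taking logarithms and using [Gamma_k k x = k ^ (x / k - 1) Gamma (x / k)] (substitute
   [u = x ^ k / k]), [ln theta] is, up to a constant, [a F x - b F (x / k)] at [x = alpha + beta t],
   where [F y = ln Gamma (y + 1) + euler_gamma y]. By Gauss's limit formula [F y] is the limit of
   [ln Gamma (m + 2) + sum_(j <= m + 1) (y / j - ln (y + j))], the error being controlled by the
   log-convexity of [Gamma]. For [k >= 1] and [a >= b] every term
   [a (y / j - ln (y + j)) - b (y / (k j) - ln (y / k + j))] has a nonnegative derivative in [y], so
   [theta] is nondecreasing; the two-sided bound is [theta 0 <= theta t <= theta 1] divided by the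
   factors of [theta t] other than [Gamma x ^ a / Gamma_k x ^ b]. *)

From Stdlib Require Import Reals Lra Lia Classical.
From Coquelicot Require Import Coquelicot.
Open Scope R_scope.

Notation is_RInt_0oo f l := (is_RInt_gen f (at_right 0) (Rbar_locally p_infty) l).

Lemma exp_le_compat x y : x <= y -> exp x <= exp y.
Proof. intros [H| ->]; [left; apply exp_increasing|]; lra. Qed.

Lemma exp_le_1 x : x <= 0 -> exp x <= 1.
Proof. intros Hx. rewrite <- exp_0. now apply exp_le_compat. Qed.

Lemma exp_minus_ln p A : 0 < A -> exp (p - ln A) = exp p / A.
Proof. intros HA. unfold Rminus. rewrite exp_plus, exp_Ropp, exp_ln; auto. Qed.

Lemma ln_le_sub_1 y : 0 < y -> ln y <= y - 1.
Proof. intros Hy. generalize (exp_ineq1_le (ln y)). rewrite exp_ln; lra. Qed.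

Lemma ball_R_between (x y : R) (eps : posreal) : ball x eps y -> - eps < y - x < eps.
Proof. intros H. now apply Rabs_lt_between. Qed.

Lemma ball_R_of_abs (x y : R) (eps : posreal) : Rabs (y - x) < eps -> ball x eps y.
Proof. easy. Qed.

Lemma at_right_0_lt c : 0 < c -> at_right 0 (fun a => 0 < a < c).
Proof.
  intros Hc. exists (mkposreal c Hc). intros y Hy Hy0.
  apply ball_R_between in Hy. simpl in Hy. lra.
Qed.

Lemma eventually_segment_in c d : 0 < c ->
  filter_prod (at_right 0) (Rbar_locally p_infty)
    (fun ab : R * R => 0 < fst ab < c /\ d < snd ab).
Proof.
  intros Hc. apply Filter_prod with (fun a => 0 < a < c) (fun b => d < b).
  - now apply at_right_0_lt.
  - now exists d.
  - now intros.
Qed.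

Lemma eventually_segment_pos :
  filter_prod (at_right 0) (Rbar_locally p_infty)
    (fun ab : R * R => forall x, Rmin (fst ab) (snd ab) <= x <= Rmax (fst ab) (snd ab) -> 0 < x).
Proof.
  generalize (eventually_segment_in 1 1 Rlt_0_1). apply filter_imp.
  intros [a b] [H1 H2] x Hx. simpl in *. rewrite Rmin_left in Hx; lra.
Qed.

Lemma is_RInt_0oo_lim (f : R -> R) (l : R) : is_RInt_0oo f l ->
  filterlim (fun ab : R * R => RInt f (fst ab) (snd ab))
    (filter_prod (at_right 0) (Rbar_locally p_infty)) (locally l).
Proof.
  intros H P HP. specialize (H P HP). unfold filtermapi in H. unfold filtermap.
  revert H. apply filter_imp. intros x (y & Hy & Py).
  now rewrite (is_RInt_unique _ _ _ _ Hy).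
Qed.

Section NonnegIntegrand.

Variable f : R -> R.
Hypothesis f_cont : forall x, 0 < x -> continuous f x.
Hypothesis f_ge0 : forall x, 0 < x -> 0 <= f x.

Lemma ex_RInt_pos a b : 0 < a -> a <= b -> ex_RInt f a b.
Proof.
  intros Ha Hab. apply (ex_RInt_continuous (V := R_CompleteNormedModule)).
  intros z Hz. apply f_cont. rewrite Rmin_left in Hz; lra.
Qed.

Lemma RInt_pos_le_superset a b a' b' :
  0 < a' -> a' <= a -> a <= b -> b <= b' -> RInt f a b <= RInt f a' b'.
Proof.
  intros Ha' Ha Hab Hb.
  rewrite <- (RInt_Chasles f a' a b'), <- (RInt_Chasles f a b b');
    try apply ex_RInt_pos; try lra.
  assert (0 <= RInt f a' a) by (apply RInt_ge_0; try apply ex_RInt_pos; intros; try apply f_ge0; lra).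
  assert (0 <= RInt f b b') by (apply RInt_ge_0; try apply ex_RInt_pos; intros; try apply f_ge0; lra).
  unfold plus; simpl. lra.
Qed.

Lemma RInt_pos_le_split C1 C2 :
  (forall a, 0 < a <= 1 -> RInt f a 1 <= C1) -> (forall b, 1 <= b -> RInt f 1 b <= C2) ->
  forall a b, 0 < a -> a <= b -> RInt f a b <= C1 + C2.
Proof.
  intros H1 H2 a b Ha Hab.
  assert (Ha' : 0 < Rmin a 1 <= Rmin a 1) by (split; [apply Rmin_glb_lt|]; lra).
  generalize (Rmin_l a 1) (Rmin_r a 1) (Rmax_l b 1) (Rmax_r b 1). intros.
  apply Rle_trans with (RInt f (Rmin a 1) (Rmax b 1)).
  - apply RInt_pos_le_superset; lra.
  - rewrite <- (RInt_Chasles f _ 1); try apply ex_RInt_pos; try lra.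
    apply Rplus_le_compat; [apply H1 | apply H2]; lra.
Qed.

Lemma is_RInt_0oo_of_lim l :
  filterlim (fun ab : R * R => RInt f (fst ab) (snd ab))
    (filter_prod (at_right 0) (Rbar_locally p_infty)) (locally l) ->
  is_RInt_0oo f l.
Proof.
  intros Hlim P HP. specialize (Hlim P HP). unfold filtermap in Hlim. unfold filtermapi.
  generalize (filter_and _ _ Hlim (eventually_segment_in 1 1 Rlt_0_1)).
  apply filter_imp. intros [a b] [HPab Hab]. simpl in *.
  exists (RInt f a b). split; auto.
  apply (RInt_correct (V := R_CompleteNormedModule)), ex_RInt_pos; lra.
Qed.

(* The improper integral of a nonnegative function is the supremum of its proper integrals. *)
Lemma is_RInt_0oo_of_bounded C :
  (forall a b, 0 < a -> a <= b -> RInt f a b <= C) -> exists l, is_RInt_0oo f l.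
Proof.
  intros HC.
  set (E := fun r => exists a b, 0 < a <= b /\ r = RInt f a b).
  destruct (completeness E) as [S [HS_ub HS_lub]].
  { exists C. intros r (a & b & Hab & ->). apply HC; lra. }
  { exists (RInt f 1 1), 1, 1. split; auto; lra. }
  exists S. apply is_RInt_0oo_of_lim, filterlim_locally. intros eps.
  pose proof (cond_pos eps) as Heps.
  assert (Hnear : exists a0 b0, 0 < a0 <= b0 /\ S - eps < RInt f a0 b0).
  { apply NNPP. intros Hn.
    assert (S <= S - eps); [|lra].
    apply HS_lub. intros r (a & b & Hab & ->).
    apply Rnot_lt_le. intros Hl. apply Hn. now exists a, b. }
  destruct Hnear as (a0 & b0 & Hab0 & Hlt).
  generalize (eventually_segment_in a0 b0 ltac:(lra)). apply filter_imp.
  intros [a b] [Ha Hb]. simpl in *. apply ball_R_of_abs, Rabs_def1.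
  - assert (RInt f a b <= S) by (apply HS_ub; exists a, b; split; auto; lra). lra.
  - assert (RInt f a0 b0 <= RInt f a b) by (apply RInt_pos_le_superset; lra). lra.
Qed.

Lemma is_RInt_0oo_ge_RInt l c d : is_RInt_0oo f l -> 0 < c -> c <= d -> RInt f c d <= l.
Proof.
  intros Hf Hc Hcd.
  apply (filterlim_le (F := filter_prod (at_right 0) (Rbar_locally p_infty))
           (fun _ => RInt f c d) (fun ab => RInt f (fst ab) (snd ab)) (RInt f c d) l).
  - generalize (eventually_segment_in c d Hc). apply filter_imp.
    intros [a b] [Ha Hb]. apply RInt_pos_le_superset; simpl in *; lra.
  - apply filterlim_const.
  - now apply is_RInt_0oo_lim.
Qed.

End NonnegIntegrand.

Lemma is_RInt_0oo_ex_RInt (f : R -> R) (l : R) : is_RInt_0oo f l ->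
  filter_prod (at_right 0) (Rbar_locally p_infty) (fun ab : R * R => ex_RInt f (fst ab) (snd ab)).
Proof.
  intros H. generalize (H (fun _ => True) filter_true). unfold filtermapi.
  apply filter_imp. intros ab (y & Hy & _). now exists y.
Qed.

Lemma is_RInt_0oo_le (f g : R -> R) (lf lg : R) :
  is_RInt_0oo f lf -> is_RInt_0oo g lg -> (forall x, 0 < x -> f x <= g x) -> lf <= lg.
Proof.
  intros Hf Hg Hle.
  apply (filterlim_le (F := filter_prod (at_right 0) (Rbar_locally p_infty))
           (fun ab => RInt f (fst ab) (snd ab)) (fun ab => RInt g (fst ab) (snd ab)) lf lg);
    try now apply is_RInt_0oo_lim.
  generalize (filter_and _ _ (filter_and _ _ (is_RInt_0oo_ex_RInt f lf Hf) (is_RInt_0oo_ex_RInt g lg Hg))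
                (eventually_segment_in 1 1 Rlt_0_1)).
  apply filter_imp. intros [a b] [[Ef Eg] Hab]. simpl in *.
  apply RInt_le; auto; try lra. intros; apply Hle; lra.
Qed.

Lemma is_RInt_0oo_ext (f g : R -> R) (l : R) :
  (forall x, 0 < x -> f x = g x) -> is_RInt_0oo f l -> is_RInt_0oo g l.
Proof.
  intros He. apply is_RInt_gen_ext.
  generalize eventually_segment_pos. apply filter_imp. intros ab Hab x Hx. apply He, Hab. lra.
Qed.

Lemma is_RInt_0oo_plus (f g : R -> R) (lf lg : R) :
  is_RInt_0oo f lf -> is_RInt_0oo g lg -> is_RInt_0oo (fun x => f x + g x) (lf + lg).
Proof. apply (is_RInt_gen_plus (V := R_NormedModule)). Qed.

Lemma is_RInt_0oo_scal (f : R -> R) (c l : R) :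
  is_RInt_0oo f l -> is_RInt_0oo (fun x => c * f x) (c * l).
Proof. apply (is_RInt_gen_scal (V := R_NormedModule)). Qed.

Lemma is_RInt_0oo_derive (u h : R -> R) (la lb : R) :
  (forall x, 0 < x -> is_derive u x (h x)) -> (forall x, 0 < x -> continuous h x) ->
  filterlim u (at_right 0) (locally la) -> filterlim u (Rbar_locally p_infty) (locally lb) ->
  is_RInt_0oo h (lb - la).
Proof.
  intros Hd Hc Ha Hb.
  assert (HD : forall x, 0 < x -> Derive u x = h x) by (intros; now apply is_derive_unique, Hd).
  apply (is_RInt_0oo_ext (Derive u)); auto.
  apply is_RInt_gen_Derive; auto;
    generalize eventually_segment_pos; apply filter_imp; intros ab Hab x Hx.
  - exists (h x). now apply Hd, Hab.
  - assert (Hx0 : 0 < x) by now apply Hab.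
    apply continuous_ext_loc with h; [|now apply Hc].
    exists (mkposreal x Hx0). intros y Hy. apply ball_R_between in Hy. simpl in Hy.
    symmetry. apply HD. lra.
Qed.

Lemma lim_at_right_0_of_Rpower_bound (u : R -> R) (s : R) : 0 < s ->
  (forall x, 0 < x < 1 -> Rabs (u x) <= Rpower x s) -> filterlim u (at_right 0) (locally 0).
Proof.
  intros Hs Hu. apply filterlim_locally. intros eps.
  set (r := Rpower eps (/ s)).
  assert (Hr : 0 < r) by apply exp_pos.
  assert (Hrs : Rpower r s = eps).
  { unfold r. rewrite Rpower_mult, Rinv_l, Rpower_1; [|apply cond_pos|lra]. easy. }
  generalize (at_right_0_lt (Rmin 1 r) ltac:(apply Rmin_glb_lt; lra)). apply filter_imp.
  intros y Hy. generalize (Rmin_l 1 r) (Rmin_r 1 r). intros.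
  apply ball_R_of_abs. rewrite Rminus_0_r.
  eapply Rle_lt_trans; [apply Hu; lra|].
  rewrite <- Hrs. apply Rlt_Rpower_l; lra.
Qed.

Lemma lim_p_infty_of_exp_bound (u : R -> R) (K : R) : 0 < K ->
  (forall x, 1 <= x -> Rabs (u x) <= K * exp (- x / 2)) ->
  filterlim u (Rbar_locally p_infty) (locally 0).
Proof.
  intros HK Hu. apply filterlim_locally. intros eps.
  pose proof (cond_pos eps) as Heps.
  exists (Rmax 1 (2 * (ln K - ln eps))). intros x Hx.
  generalize (Rmax_l 1 (2 * (ln K - ln eps))) (Rmax_r 1 (2 * (ln K - ln eps))). intros.
  apply ball_R_of_abs. rewrite Rminus_0_r.
  eapply Rle_lt_trans; [apply Hu; lra|].
  replace (pos eps) with (K * exp (ln eps - ln K)).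
  - apply Rmult_lt_compat_l; auto. apply exp_increasing. lra.
  - unfold Rminus. rewrite exp_plus, exp_Ropp, !exp_ln; auto. field. lra.
Qed.

Lemma Rpower_continuous s x : 0 < x -> continuous (fun x => Rpower x s) x.
Proof.
  intros Hx. apply (ex_derive_continuous (K := R_AbsRing) (V := R_NormedModule)).
  unfold Rpower. auto_derive. auto.
Qed.

Lemma exp_mul_ln_pred y x : 0 < x -> exp ((y - 1) * ln x) = exp (y * ln x) / x.
Proof.
  intros Hx. replace ((y - 1) * ln x) with (y * ln x - ln x) by ring. now apply exp_minus_ln.
Qed.

Lemma is_derive_Rpower_div s x : 0 < s -> 0 < x ->
  is_derive (fun x => Rpower x s / s) x (Rpower x (s - 1)).
Proof.
  intros Hs Hx. unfold Rpower. auto_derive; auto.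
  rewrite exp_mul_ln_pred; auto. field. lra.
Qed.

Definition gamma_integrand (s x : R) := exp (- x) * Rpower x (s - 1).

Lemma gamma_integrand_continuous s x : 0 < x -> continuous (gamma_integrand s) x.
Proof.
  intros Hx. apply (ex_derive_continuous (K := R_AbsRing) (V := R_NormedModule)).
  unfold gamma_integrand, Rpower. auto_derive. auto.
Qed.

Lemma gamma_integrand_pos s x : 0 < gamma_integrand s x.
Proof. apply Rmult_lt_0_compat; apply exp_pos. Qed.

(* From [ln (x / 2m) <= x / 2m - 1] with [m >= |s - 1|]: the power is absorbed by [exp (x / 2)]. *)
Lemma gamma_integrand_le_exp s :
  exists K, 0 < K /\ forall x, 1 <= x -> gamma_integrand s x <= K * exp (- x / 2).
Proof.
  set (m := Rabs (s - 1) + 1).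
  assert (Hm : 0 < m) by (unfold m; generalize (Rabs_pos (s - 1)); lra).
  exists (exp (m * ln (2 * m))). split; [apply exp_pos|].
  intros x Hx. unfold gamma_integrand, Rpower. rewrite <- !exp_plus.
  apply exp_le_compat.
  assert (Hl : 0 <= ln x) by (rewrite <- ln_1; apply ln_le; lra).
  assert (H1 : (s - 1) * ln x <= m * ln x).
  { apply Rmult_le_compat_r; auto. unfold m. generalize (Rle_abs (s - 1)). lra. }
  assert (H2 : ln (x / (2 * m)) <= x / (2 * m) - 1) by (apply ln_le_sub_1, Rdiv_lt_0_compat; lra).
  unfold Rdiv in H2. rewrite ln_mult, ln_Rinv in H2 by (try apply Rinv_0_lt_compat; lra).
  assert (m * (ln x - ln (2 * m)) <= m * (x * / (2 * m) - 1)) by (apply Rmult_le_compat_l; lra).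
  replace (m * (x * / (2 * m) - 1)) with (x / 2 - m) in H by (field; lra).
  lra.
Qed.

Lemma RInt_gamma_integrand_0_1 s a : 0 < s -> 0 < a <= 1 -> RInt (gamma_integrand s) a 1 <= 1 / s.
Proof.
  intros Hs Ha.
  apply Rle_trans with (RInt (fun x => Rpower x (s - 1)) a 1).
  { apply RInt_le; try lra;
      try (apply ex_RInt_pos; intros; try apply Rpower_continuous; try apply gamma_integrand_continuous; lra).
    intros x Hx. unfold gamma_integrand.
    rewrite <- (Rmult_1_l (Rpower x (s - 1))) at 2.
    apply Rmult_le_compat_r; [left; apply exp_pos|].
    apply exp_le_1. lra. }
  assert (Hd : is_RInt (fun x => Rpower x (s - 1)) a 1 (Rpower 1 s / s - Rpower a s / s)).
  { apply (is_RInt_derive (fun x => Rpower x s / s)); intros x Hx; rewrite Rmin_left in Hx by lra.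
    - apply is_derive_Rpower_div; lra.
    - apply Rpower_continuous; lra. }
  rewrite (is_RInt_unique _ _ _ _ Hd). unfold Rpower at 1. rewrite ln_1, Rmult_0_r, exp_0.
  assert (0 < Rpower a s / s) by (apply Rdiv_lt_0_compat; auto; apply exp_pos).
  lra.
Qed.

Lemma RInt_gamma_integrand_1_oo s K b :
  (forall x, 1 <= x -> gamma_integrand s x <= K * exp (- x / 2)) -> 0 < K -> 1 <= b ->
  RInt (gamma_integrand s) 1 b <= 2 * K.
Proof.
  intros HK HK0 Hb.
  assert (Hd : forall x, is_derive (fun x => - 2 * K * exp (- x / 2)) x (K * exp (- x / 2)))
    by (intros; auto_derive; [auto | unfold Rdiv; field]).
  assert (Hc : forall x, continuous (fun x => K * exp (- x / 2)) x).
  { intros. apply (ex_derive_continuous (K := R_AbsRing) (V := R_NormedModule)). auto_derive; auto. }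
  apply Rle_trans with (RInt (fun x => K * exp (- x / 2)) 1 b).
  { apply RInt_le; try lra; try (apply ex_RInt_pos; intros; auto; try apply gamma_integrand_continuous; lra).
    intros x Hx. apply HK. lra. }
  assert (HI : is_RInt (fun x => K * exp (- x / 2)) 1 b
                 (- 2 * K * exp (- b / 2) - - 2 * K * exp (- (1) / 2)))
    by (apply (is_RInt_derive (fun x => - 2 * K * exp (- x / 2))); auto).
  rewrite (is_RInt_unique _ _ _ _ HI).
  assert (0 < exp (- b / 2)) by apply exp_pos.
  assert (exp (- (1) / 2) <= 1) by (apply exp_le_1; lra).
  nra.
Qed.

Lemma Gamma_eq_of_is_RInt s l : is_RInt_0oo (gamma_integrand s) l -> Gamma s = l.
Proof. exact (is_RInt_gen_unique _ _). Qed.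

Lemma is_RInt_Gamma s : 0 < s -> is_RInt_0oo (gamma_integrand s) (Gamma s).
Proof.
  intros Hs. destruct (gamma_integrand_le_exp s) as (K & HK0 & HK).
  assert (Hcont := gamma_integrand_continuous s).
  assert (Hge0 : forall x, 0 < x -> 0 <= gamma_integrand s x) by (intros; left; apply gamma_integrand_pos).
  destruct (is_RInt_0oo_of_bounded _ Hcont Hge0 (1 / s + 2 * K)) as [l Hl].
  - apply RInt_pos_le_split; auto; intros.
    + now apply RInt_gamma_integrand_0_1.
    + now apply RInt_gamma_integrand_1_oo.
  - now rewrite (Gamma_eq_of_is_RInt s l Hl).
Qed.

Lemma Gamma_pos s : 0 < s -> 0 < Gamma s.
Proof.
  intros Hs. apply Rlt_le_trans with (RInt (gamma_integrand s) 1 2).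
  - apply RInt_gt_0; try lra; intros; [apply gamma_integrand_pos | apply gamma_integrand_continuous; lra].
  - apply (is_RInt_0oo_ge_RInt _ (gamma_integrand_continuous s)); try lra.
    + intros; left; apply gamma_integrand_pos.
    + now apply is_RInt_Gamma.
Qed.

(* Integration by parts, with boundary term [- exp (- x) x ^ s]. *)
Lemma Gamma_succ s : 0 < s -> Gamma (s + 1) = s * Gamma s.
Proof.
  intros Hs.
  set (u := fun x => - (exp (- x) * Rpower x s)).
  assert (Hu : forall x, 0 < x -> Rabs (u x) = exp (- x) * Rpower x s).
  { intros x Hx. unfold u. rewrite Rabs_Ropp, Rabs_pos_eq; auto. left; apply Rmult_lt_0_compat; apply exp_pos. }
  assert (HG : is_RInt_0oo (fun x => gamma_integrand (s + 1) x - s * gamma_integrand s x) (0 - 0)).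
  { apply is_RInt_0oo_derive with u.
    - intros x Hx. unfold u, gamma_integrand, Rpower. auto_derive; auto.
      replace (s + 1 - 1) with s by ring. rewrite exp_mul_ln_pred; auto. field. lra.
    - intros x Hx. apply (ex_derive_continuous (K := R_AbsRing) (V := R_NormedModule)).
      unfold gamma_integrand, Rpower. auto_derive. auto.
    - apply lim_at_right_0_of_Rpower_bound with s; auto. intros x Hx. rewrite Hu by lra.
      rewrite <- (Rmult_1_l (Rpower x s)) at 2. apply Rmult_le_compat_r; [left; apply exp_pos|].
      apply exp_le_1. lra.
    - destruct (gamma_integrand_le_exp (s + 1)) as (K & HK0 & HK).
      apply lim_p_infty_of_exp_bound with K; auto. intros x Hx. rewrite Hu by lra.
      specialize (HK x Hx). unfold gamma_integrand in HK. now replace (s + 1 - 1) with s in HK by ring. }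
  assert (H := is_RInt_0oo_plus _ _ _ _ HG (is_RInt_0oo_scal _ s _ (is_RInt_Gamma s Hs))).
  rewrite (Gamma_eq_of_is_RInt (s + 1) (0 - 0 + s * Gamma s)); [ring|].
  revert H. apply is_RInt_0oo_ext. intros x _. ring.
Qed.

Lemma exp_convex p q l : 0 <= l <= 1 ->
  exp (l * p + (1 - l) * q) <= l * exp p + (1 - l) * exp q.
Proof.
  intros Hl. set (m := l * p + (1 - l) * q).
  assert (Hp : exp p = exp m * exp (p - m)) by (rewrite <- exp_plus; f_equal; ring).
  assert (Hq : exp q = exp m * exp (q - m)) by (rewrite <- exp_plus; f_equal; ring).
  assert (H1 := exp_ineq1_le (p - m)). assert (H2 := exp_ineq1_le (q - m)).
  assert (Hm := exp_pos m).
  rewrite Hp, Hq.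
  assert (exp m * (1 + (p - m)) <= exp m * exp (p - m)) by (apply Rmult_le_compat_l; lra).
  assert (exp m * (1 + (q - m)) <= exp m * exp (q - m)) by (apply Rmult_le_compat_l; lra).
  assert (l * (exp m * (1 + (p - m))) + (1 - l) * (exp m * (1 + (q - m))) = exp m) by (unfold m; ring).
  nra.
Qed.

(* Instead of Hölder's inequality: the integrand at [l x + (1 - l) y] is a weighted geometric
   mean of the integrands at [x] and [y] normalised by [Gamma x] and [Gamma y], hence below
   their weighted arithmetic mean, whose integral is [1]. *)
Lemma Gamma_log_convex x y l : 0 < x -> 0 < y -> 0 <= l <= 1 ->
  Gamma (l * x + (1 - l) * y) <= exp (l * ln (Gamma x) + (1 - l) * ln (Gamma y)).
Proof.
  intros Hx Hy Hl.
  set (A := Gamma x). set (B := Gamma y). set (E := exp (l * ln A + (1 - l) * ln B)).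
  assert (HA : 0 < A) by now apply Gamma_pos.
  assert (HB : 0 < B) by now apply Gamma_pos.
  set (m := l * x + (1 - l) * y).
  assert (Hm : 0 < m) by (unfold m; destruct (Req_dec l 0); [subst; lra | nra]).
  assert (Hmean : is_RInt_0oo
            (fun t => E * (l / A * gamma_integrand x t + (1 - l) / B * gamma_integrand y t))
            (E * (l / A * A + (1 - l) / B * B))).
  { apply is_RInt_0oo_scal, is_RInt_0oo_plus; apply is_RInt_0oo_scal; now apply is_RInt_Gamma. }
  replace (E * (l / A * A + (1 - l) / B * B)) with E in Hmean by (field; lra).
  apply (is_RInt_0oo_le _ _ _ _ (is_RInt_Gamma m Hm) Hmean).
  intros t Ht.
  set (P := - t + (x - 1) * ln t - ln A). set (Q := - t + (y - 1) * ln t - ln B).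
  assert (EP : exp P = gamma_integrand x t / A).
  { unfold P. rewrite exp_minus_ln, exp_plus; auto. }
  assert (EQ : exp Q = gamma_integrand y t / B).
  { unfold Q. rewrite exp_minus_ln, exp_plus; auto. }
  replace (gamma_integrand m t) with (E * exp (l * P + (1 - l) * Q))
    by (unfold E, gamma_integrand, Rpower; rewrite <- !exp_plus; f_equal; unfold P, Q, m; ring).
  apply Rmult_le_compat_l; [left; apply exp_pos|].
  eapply Rle_trans; [now apply exp_convex|]. rewrite EP, EQ. right. field. lra.
Qed.

Definition lnGamma x := ln (Gamma x).

Lemma lnGamma_succ s : 0 < s -> lnGamma (s + 1) = ln s + lnGamma s.
Proof. intros Hs. unfold lnGamma. rewrite Gamma_succ; auto. apply ln_mult; auto. now apply Gamma_pos. Qed.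

Lemma lnGamma_convex a b c : 0 < a -> a < b -> b < c ->
  lnGamma b * (c - a) <= (c - b) * lnGamma a + (b - a) * lnGamma c.
Proof.
  intros Ha Hab Hbc.
  set (l := (c - b) / (c - a)).
  assert (Hl : 0 <= l <= 1).
  { unfold l. split; [apply Rdiv_le_0_compat; lra|].
    apply Rmult_le_reg_r with (c - a); [lra|]. unfold Rdiv. rewrite Rmult_assoc, Rinv_l; lra. }
  assert (H := Gamma_log_convex a c l Ha ltac:(lra) Hl).
  replace (l * a + (1 - l) * c) with b in H by (unfold l; field; lra).
  apply ln_le in H; [|apply Gamma_pos; lra].
  rewrite ln_exp in H. unfold lnGamma.
  apply Rmult_le_compat_r with (r := c - a) in H; [|lra].
  replace ((l * ln (Gamma a) + (1 - l) * ln (Gamma c)) * (c - a))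
    with ((c - b) * ln (Gamma a) + (b - a) * ln (Gamma c)) in H by (unfold l; field; lra).
  exact H.
Qed.

Lemma filterlim_at_right_0 {T} (F : (T -> Prop) -> Prop) {FF : Filter F} (u : T -> R) :
  filterlim u F (locally 0) -> F (fun x => 0 < u x) -> filterlim u F (at_right 0).
Proof.
  intros Hu Hpos P [eps HP]. unfold filtermap. apply (filter_imp (fun x => ball 0 eps (u x) /\ 0 < u x)).
  - intros x [Hb Hx]. now apply HP.
  - apply filter_and; auto. apply (Hu (ball 0 eps)). apply locally_ball.
Qed.

Section kSubstitution.

Variable k : R.
Hypothesis hk : 1 <= k.

Let sub x := Rpower x k / k.

Lemma sub_pos x : 0 < sub x.
Proof. apply Rdiv_lt_0_compat; [apply exp_pos | lra]. Qed.

Lemma sub_at_right_0 : filterlim sub (at_right 0) (at_right 0).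
Proof.
  apply filterlim_at_right_0;
    [apply at_right_proper_filter | | exists (mkposreal 1 Rlt_0_1); intros; apply sub_pos].
  apply lim_at_right_0_of_Rpower_bound with k; [lra|]. intros x Hx.
  rewrite Rabs_pos_eq by (left; apply sub_pos). unfold sub.
  apply Rmult_le_reg_r with k; [lra|]. unfold Rdiv. rewrite Rmult_assoc, Rinv_l by lra.
  assert (0 < Rpower x k) by apply exp_pos. nra.
Qed.

Lemma sub_p_infty : filterlim sub (Rbar_locally p_infty) (Rbar_locally p_infty).
Proof.
  intros P [M HM]. exists (Rmax 1 (k * M)). intros x Hx. apply HM.
  generalize (Rmax_l 1 (k * M)) (Rmax_r 1 (k * M)). intros.
  assert (x <= Rpower x k) by (rewrite <- (Rpower_1 x) at 1 by lra; apply Rle_Rpower; lra).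
  unfold sub. apply Rmult_lt_reg_r with k; [lra|]. unfold Rdiv. rewrite Rmult_assoc, Rinv_l; lra.
Qed.

Lemma k_integrand_eq y x : 0 < x ->
  exp (- (Rpower x k / k)) * Rpower x (y - 1)
  = Rpower k (y / k - 1) * (Rpower x (k - 1) * gamma_integrand (y / k) (sub x)).
Proof.
  intros Hx. unfold gamma_integrand, sub.
  assert (Hl : ln (Rpower x k / k) = k * ln x - ln k).
  { unfold Rdiv. rewrite ln_mult, ln_Rpower, ln_Rinv; try lra.
    - apply exp_pos.
    - apply Rinv_0_lt_compat; lra. }
  replace (Rpower (Rpower x k / k) (y / k - 1)) with (exp ((y / k - 1) * (k * ln x - ln k)))
    by (rewrite <- Hl; reflexivity).
  assert (E : exp ((y / k - 1) * ln k) * exp ((k - 1) * ln x)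
              * exp ((y / k - 1) * (k * ln x - ln k)) = exp ((y - 1) * ln x)).
  { rewrite <- !exp_plus. f_equal. field. lra. }
  unfold Rpower. rewrite <- E. ring.
Qed.

Let k_integrand y x := exp (- (Rpower x k / k)) * Rpower x (y - 1).

Lemma RInt_k_integrand y a b : 0 < a -> a <= b ->
  RInt (k_integrand y) a b = Rpower k (y / k - 1) * RInt (gamma_integrand (y / k)) (sub a) (sub b).
Proof.
  intros Ha Hab.
  assert (H : is_RInt (fun x => scal (Rpower x (k - 1)) (gamma_integrand (y / k) (sub x))) a b
                (RInt (gamma_integrand (y / k)) (sub a) (sub b))).
  { apply (is_RInt_comp (V := R_CompleteNormedModule)); intros x Hx; rewrite Rmin_left in Hx by lra.
    - apply gamma_integrand_continuous, sub_pos.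
    - split; [apply is_derive_Rpower_div | apply Rpower_continuous]; lra. }
  apply is_RInt_unique. apply (is_RInt_scal _ _ _ (Rpower k (y / k - 1))) in H.
  revert H. apply is_RInt_ext. intros x Hx. rewrite Rmin_left in Hx by lra.
  unfold k_integrand. rewrite k_integrand_eq by lra. reflexivity.
Qed.

Lemma Gamma_k_Gamma y : 0 < y -> Gamma_k k y = Rpower k (y / k - 1) * Gamma (y / k).
Proof.
  intros Hy. assert (Hyk : 0 < y / k) by (apply Rdiv_lt_0_compat; lra).
  assert (Hcont : forall x, 0 < x -> continuous (k_integrand y) x).
  { intros x Hx. apply (ex_derive_continuous (K := R_AbsRing) (V := R_NormedModule)).
    unfold k_integrand, Rpower. auto_derive. repeat split; auto; lra. }
  assert (Hlim : filterlim (fun ab : R * R => RInt (gamma_integrand (y / k)) (sub (fst ab)) (sub (snd ab)))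
                   (filter_prod (at_right 0) (Rbar_locally p_infty)) (locally (Gamma (y / k)))).
  { apply (filterlim_comp _ _ _ (fun ab : R * R => (sub (fst ab), sub (snd ab)))
             (fun ab : R * R => RInt (gamma_integrand (y / k)) (fst ab) (snd ab))
             _ (filter_prod (at_right 0) (Rbar_locally p_infty))).
    - apply filterlim_pair.
      + apply (filterlim_comp _ _ _ fst sub _ (at_right 0)); [apply filterlim_fst | apply sub_at_right_0].
      + apply (filterlim_comp _ _ _ snd sub _ (Rbar_locally p_infty));
          [apply filterlim_snd | apply sub_p_infty].
    - now apply is_RInt_0oo_lim, is_RInt_Gamma. }
  apply (is_RInt_gen_unique (k_integrand y)), (is_RInt_0oo_of_lim _ Hcont).
  apply (filterlim_ext_loc (fun ab : R * R =>
           Rpower k (y / k - 1) * RInt (gamma_integrand (y / k)) (sub (fst ab)) (sub (snd ab)))).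
  - generalize (eventually_segment_in 1 1 Rlt_0_1). apply filter_imp.
    intros [a b] [Ha Hb]. simpl in *. symmetry. apply RInt_k_integrand; lra.
  - apply (filterlim_comp _ _ _ _ (fun z => Rpower k (y / k - 1) * z) _ (locally (Gamma (y / k)))); auto.
    apply (ex_derive_continuous (K := R_AbsRing) (V := R_NormedModule)). auto_derive; auto.
Qed.

End kSubstitution.

Lemma INR_S_pos n : 0 < INR (S n).
Proof. apply lt_0_INR. lia. Qed.

Lemma ln_sub_ln_le x y : 0 < x -> 0 < y -> ln x - ln y <= x / y - 1.
Proof.
  intros Hx Hy. assert (H := ln_le_sub_1 (x / y) (Rdiv_lt_0_compat _ _ Hx Hy)).
  unfold Rdiv in H. rewrite ln_mult, ln_Rinv in H; auto. now apply Rinv_0_lt_compat.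
Qed.

Lemma is_lim_seq_inv_S : is_lim_seq (fun n => / INR (S n)) 0.
Proof.
  change (is_lim_seq (fun n => / INR (S n)) (Rbar_inv p_infty)).
  apply is_lim_seq_inv; [|discriminate]. now apply (is_lim_seq_incr_1 INR), is_lim_seq_INR.
Qed.

Definition harmonic_gap (n : nat) := sum_f_R0 (fun j => / INR (S j)) n - ln (INR (S n)).

Lemma harmonic_gap_decr n : harmonic_gap (S n) <= harmonic_gap n.
Proof.
  unfold harmonic_gap. rewrite tech5.
  assert (H := ln_sub_ln_le (INR (S n)) (INR (S (S n))) (INR_S_pos n) (INR_S_pos (S n))).
  rewrite (S_INR (S n)) in *. assert (0 < INR (S n)) by apply INR_S_pos.
  replace (INR (S n) / (INR (S n) + 1) - 1) with (- / (INR (S n) + 1)) in H by (field; lra).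
  lra.
Qed.

Lemma ln_le_harmonic n : ln (INR (S (S n))) <= sum_f_R0 (fun j => / INR (S j)) n.
Proof.
  induction n as [|n IH].
  - simpl. assert (H := ln_le_sub_1 2 ltac:(lra)). replace (1 + 1) with 2 by ring. lra.
  - rewrite tech5.
    assert (H := ln_sub_ln_le (INR (S (S (S n)))) (INR (S (S n))) (INR_S_pos _) (INR_S_pos _)).
    rewrite (S_INR (S (S n))) in *. assert (0 < INR (S (S n))) by apply INR_S_pos.
    replace ((INR (S (S n)) + 1) / INR (S (S n)) - 1) with (/ INR (S (S n))) in H by (field; lra).
    lra.
Qed.

Lemma harmonic_gap_ge0 n : 0 <= harmonic_gap n.
Proof.
  unfold harmonic_gap. assert (H := ln_le_harmonic n).
  assert (ln (INR (S n)) <= ln (INR (S (S n)))) by (apply ln_le; [apply INR_S_pos | apply le_INR; lia]).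
  lra.
Qed.

Lemma is_lim_seq_harmonic_gap : is_lim_seq harmonic_gap euler_gamma.
Proof.
  assert (Hc := Lim_seq_correct harmonic_gap (ex_lim_seq_decr harmonic_gap harmonic_gap_decr)).
  assert (H0 : Rbar_le 0 (Lim_seq harmonic_gap)).
  { rewrite <- (Lim_seq_const 0). apply Lim_seq_le_loc. exists O. intros; apply harmonic_gap_ge0. }
  assert (H1 : Rbar_le (Lim_seq harmonic_gap) (harmonic_gap O)).
  { rewrite <- (Lim_seq_const (harmonic_gap O)). apply Lim_seq_le_loc. exists O. intros n _.
    induction n as [|n IH]; [lra|]. eapply Rle_trans; [apply harmonic_gap_decr | exact IH]. }
  unfold euler_gamma. fold harmonic_gap.
  destruct (Lim_seq harmonic_gap); simpl in *; easy.
Qed.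

Lemma lnGamma_add_nat y m : 0 < y ->
  lnGamma (y + INR (S (S m))) = lnGamma y + ln y + sum_f_R0 (fun j => ln (y + INR (S j))) m.
Proof.
  intros Hy. induction m as [|m IH].
  - simpl sum_f_R0. replace (y + INR 2) with (y + 1 + 1) by (simpl; ring).
    rewrite !lnGamma_succ by lra. simpl INR. ring.
  - rewrite tech5, (S_INR (S (S m))), <- Rplus_assoc, lnGamma_succ, IH; [ring|].
    generalize (pos_INR (S (S m))). lra.
Qed.

(* By convexity the slope of [lnGamma] on [[N + 1, y + N + 1]] lies between its slopes [ln N] on
   [[N, N + 1]] and [ln (y + N + 1)] on [[y + N + 1, y + N + 2]]. *)
Lemma lnGamma_increment_bounds y N : 0 < y -> 1 <= N ->
  0 <= lnGamma (y + (N + 1)) - lnGamma (N + 1) - y * ln N <= y * ((1 + y) / N).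
Proof.
  intros Hy HN.
  assert (Hs : lnGamma (N + 1) = ln N + lnGamma N) by (apply lnGamma_succ; lra).
  split.
  - assert (H := lnGamma_convex N (N + 1) (y + (N + 1)) ltac:(lra) ltac:(lra) ltac:(lra)).
    replace (y + (N + 1) - N) with (1 + y) in H by ring.
    replace (y + (N + 1) - (N + 1)) with y in H by ring.
    replace (N + 1 - N) with 1 in H by ring. nra.
  - assert (H := lnGamma_convex (N + 1) (y + (N + 1)) (y + (N + 1) + 1) ltac:(lra) ltac:(lra) ltac:(lra)).
    rewrite (lnGamma_succ (y + (N + 1))) in H by lra.
    replace (y + (N + 1) + 1 - (N + 1)) with (1 + y) in H by ring.
    replace (y + (N + 1) + 1 - (y + (N + 1))) with 1 in H by ring.
    replace (y + (N + 1) - (N + 1)) with y in H by ring.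
    assert (Hl := ln_sub_ln_le (y + (N + 1)) N ltac:(lra) ltac:(lra)).
    replace ((y + (N + 1)) / N - 1) with ((1 + y) / N) in Hl by (field; lra).
    assert (y * (ln (y + (N + 1)) - ln N) <= y * ((1 + y) / N)) by (apply Rmult_le_compat_l; lra).
    nra.
Qed.

Definition gauss_term c y := y / c - ln (y + c).

Definition gauss_sum m y := sum_f_R0 (fun j => gauss_term (INR (S j)) y) m.

Lemma gauss_sum_eq m y : gauss_sum m y
  = y * sum_f_R0 (fun j => / INR (S j)) m - sum_f_R0 (fun j => ln (y + INR (S j))) m.
Proof.
  unfold gauss_sum, gauss_term. induction m as [|m IH].
  - simpl. unfold Rdiv. ring.
  - rewrite !tech5, IH. unfold Rdiv. ring.
Qed.

(* [lnGamma (y + 1) + euler_gamma y], i.e. [sum_j (y / j - ln (1 + y / j))] by Weierstrass's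
   product formula. *)
Definition weierstrass_log y := lnGamma y + ln y + euler_gamma * y.

(* The remainder is [y] times the error of [harmonic_gap] plus an increment of [lnGamma] bounded
   by [lnGamma_increment_bounds]. *)
Lemma is_lim_seq_weierstrass_log y : 0 < y ->
  is_lim_seq (fun m => lnGamma (INR (S m) + 1) + gauss_sum m y) (weierstrass_log y).
Proof.
  intros Hy.
  set (err := fun m => lnGamma (y + (INR (S m) + 1)) - lnGamma (INR (S m) + 1) - y * ln (INR (S m))).
  assert (Herr : is_lim_seq err 0).
  { apply is_lim_seq_le_le with (fun _ => 0) (fun m => y * (1 + y) * / INR (S m)).
    - intros m. replace (y * (1 + y) * / INR (S m)) with (y * ((1 + y) / INR (S m))) by (unfold Rdiv; ring).
      apply (lnGamma_increment_bounds y (INR (S m)) Hy). rewrite S_INR. generalize (pos_INR m). lra.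
    - apply is_lim_seq_const.
    - rewrite <- (Rmult_0_r (y * (1 + y))).
      apply is_lim_seq_mult'; [apply is_lim_seq_const | apply is_lim_seq_inv_S]. }
  assert (Hgap : is_lim_seq (fun m => y * (euler_gamma - harmonic_gap m)) 0).
  { rewrite <- (Rmult_0_r y), <- (Rminus_diag euler_gamma).
    apply is_lim_seq_mult', is_lim_seq_minus';
      [apply is_lim_seq_const | apply is_lim_seq_const | apply is_lim_seq_harmonic_gap]. }
  replace (weierstrass_log y) with (weierstrass_log y - (0 + 0)) by ring.
  apply is_lim_seq_ext with (fun m => weierstrass_log y - (y * (euler_gamma - harmonic_gap m) + err m)).
  - intros m. unfold err, weierstrass_log, harmonic_gap.
    replace (y + (INR (S m) + 1)) with (y + INR (S (S m))) by (rewrite (S_INR (S m)); ring).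
    rewrite gauss_sum_eq, lnGamma_add_nat by lra. ring.
  - apply is_lim_seq_minus'; [apply is_lim_seq_const | now apply is_lim_seq_plus'].
Qed.

Lemma nondecreasing_of_derive_nonneg (f df : R -> R) :
  (forall x, 0 < x -> is_derive f x (df x)) -> (forall x, 0 < x -> 0 <= df x) ->
  forall y1 y2, 0 < y1 -> y1 <= y2 -> f y1 <= f y2.
Proof.
  intros Hd Hdf y1 y2 Hy1 Hy12.
  assert (Hball : forall c, Rabs (c - y2) <= y2 - y1 -> 0 < c).
  { intros c Hc. apply Rabs_le_between in Hc. lra. }
  destruct (MVT_cor4 f df y2 (y2 - y1) (fun c Hc => Hd c (Hball c Hc)) y1) as (c & Hc & Hcy).
  - rewrite Rabs_minus_sym, Rabs_pos_eq; lra.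
  - assert (0 <= df c) by (apply Hdf, Hball; eapply Rle_trans; [exact Hcy|];
                          rewrite Rabs_minus_sym, Rabs_pos_eq; lra).
    nra.
Qed.

Lemma gauss_term_comb_nondecreasing a b k c y1 y2 : 1 <= k -> 0 < b <= a -> 0 < c ->
  0 < y1 -> y1 <= y2 ->
  a * gauss_term c y1 - b * gauss_term c (y1 / k) <= a * gauss_term c y2 - b * gauss_term c (y2 / k).
Proof.
  intros Hk Hb Hc. revert y1 y2.
  apply (nondecreasing_of_derive_nonneg (fun y => a * gauss_term c y - b * gauss_term c (y / k))
           (fun x => a * (x / (c * (x + c))) - b * (x / (c * (k * x + k * k * c))))).
  - intros x Hx. unfold gauss_term. assert (0 < x / k) by (apply Rdiv_lt_0_compat; lra).
    auto_derive; [repeat split; lra|]. field. repeat split; nra.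
  - intros x Hx.
    assert (x / (c * (k * x + k * k * c)) <= x / (c * (x + c))).
    { unfold Rdiv. apply Rmult_le_compat_l; [lra|].
      apply Rinv_le_contravar; [apply Rmult_lt_0_compat; lra|].
      assert (1 <= k * k) by nra. apply Rmult_le_compat_l; nra. }
    assert (0 <= x / (c * (x + c))) by (apply Rdiv_le_0_compat; nra).
    nra.
Qed.

Lemma gauss_sum_comb_nondecreasing a b k m y1 y2 : 1 <= k -> 0 < b <= a -> 0 < y1 -> y1 <= y2 ->
  a * gauss_sum m y1 - b * gauss_sum m (y1 / k) <= a * gauss_sum m y2 - b * gauss_sum m (y2 / k).
Proof.
  intros Hk Hb Hy1 Hy12. unfold gauss_sum.
  induction m as [|m IH].
  - simpl sum_f_R0. apply gauss_term_comb_nondecreasing; auto. apply (INR_S_pos 0).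
  - rewrite !tech5.
    assert (H := gauss_term_comb_nondecreasing a b k (INR (S (S m))) y1 y2 Hk Hb (INR_S_pos _) Hy1 Hy12).
    lra.
Qed.

Lemma weierstrass_log_comb_nondecreasing a b k y1 y2 : 1 <= k -> 0 < b <= a -> 0 < y1 -> y1 <= y2 ->
  a * weierstrass_log y1 - b * weierstrass_log (y1 / k)
  <= a * weierstrass_log y2 - b * weierstrass_log (y2 / k).
Proof.
  intros Hk Hb Hy1 Hy12.
  set (approx := fun y m => a * (lnGamma (INR (S m) + 1) + gauss_sum m y)
                            - b * (lnGamma (INR (S m) + 1) + gauss_sum m (y / k))).
  assert (Hlim : forall y, 0 < y ->
            is_lim_seq (approx y) (a * weierstrass_log y - b * weierstrass_log (y / k))).
  { intros y Hy. apply is_lim_seq_minus'; apply is_lim_seq_mult'; try apply is_lim_seq_const;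
      apply is_lim_seq_weierstrass_log; [lra | apply Rdiv_lt_0_compat; lra]. }
  apply (is_lim_seq_le (approx y1) (approx y2)
           (a * weierstrass_log y1 - b * weierstrass_log (y1 / k))
           (a * weierstrass_log y2 - b * weierstrass_log (y2 / k))); try (apply Hlim; lra).
  intros m. unfold approx.
  assert (H := gauss_sum_comb_nondecreasing a b k m y1 y2 Hk Hb Hy1 Hy12). lra.
Qed.

Definition ln_theta k a b alpha beta t :=
  (a - b) * ln (alpha + beta * t) + t * ((k * a * beta * euler_gamma - b * beta * euler_gamma) / k)
  + a * ln (Gamma (alpha + beta * t))
  - (- (b * beta * t / k) * ln k + b * ln (Gamma_k k (alpha + beta * t))).

Lemma exp_div A B : exp A / exp B = exp (A - B).
Proof. unfold Rminus. rewrite exp_plus, exp_Ropp. reflexivity. Qed.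

Lemma exp_mul3_div2 A B C D E : exp A * exp B * exp C / (exp D * exp E) = exp (A + B + C - (D + E)).
Proof.
  unfold Rminus. rewrite !exp_plus, exp_Ropp, exp_plus. field. split; apply exp_neq_0.
Qed.

Lemma exp_mul3_div3 A B C D E F :
  exp A * exp B * exp C / (exp D * exp E * exp F) = exp (A + B + C - (D + E + F)).
Proof.
  unfold Rminus. rewrite !exp_plus, exp_Ropp, !exp_plus. field. repeat split; apply exp_neq_0.
Qed.

Lemma theta_exp k a b alpha beta t : theta k a b alpha beta t = exp (ln_theta k a b alpha beta t).
Proof. apply exp_mul3_div2. Qed.

Lemma ln_theta_weierstrass k a b alpha beta t : 1 <= k -> 0 < alpha + beta * t ->
  ln_theta k a b alpha beta t
  = a * weierstrass_log (alpha + beta * t) - b * weierstrass_log ((alpha + beta * t) / k)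
    + (- a * euler_gamma * alpha + b * euler_gamma * alpha / k - b * alpha * ln k / k).
Proof.
  intros Hk Hx. set (x := alpha + beta * t) in *.
  unfold ln_theta, weierstrass_log, lnGamma. fold x.
  rewrite Gamma_k_Gamma, ln_mult, ln_Rpower by (try apply exp_pos; try apply Gamma_pos; auto;
                                                apply Rdiv_lt_0_compat; lra).
  assert (Hxk : ln (x / k) = ln x - ln k).
  { unfold Rdiv. rewrite ln_mult, ln_Rinv by (try apply Rinv_0_lt_compat; lra). ring. }
  rewrite Hxk. unfold x. field. lra.
Qed.

Lemma ln_theta_nondecreasing k a b alpha beta s t : 1 <= k -> 0 < b <= a -> 0 < alpha -> 0 < beta ->
  0 <= s -> s <= t -> ln_theta k a b alpha beta s <= ln_theta k a b alpha beta t.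
Proof.
  intros Hk Hb Ha Hbeta Hs Hst.
  rewrite !ln_theta_weierstrass by (auto; nra).
  apply Rplus_le_compat_r, weierstrass_log_comb_nondecreasing; auto; nra.
Qed.

Theorem theorem3p9 (k a b alpha beta : R)
  (hk : 1 <= k) (ha : 0 < a) (hb : 0 < b) (halpha : 0 < alpha) (hbeta : 0 < beta)
  (hab : b <= a) :
  (forall s t : R, 0 < s -> s <= t -> theta k a b alpha beta s <= theta k a b alpha beta t)
  /\
  (forall t : R, 0 < t < 1 ->
     let c := (k * a * beta * euler_gamma - b * beta * euler_gamma) / k in
     Rpower alpha (a - b) * exp (- t * c) * Rpower (Gamma alpha) a
       / (Rpower (alpha + beta * t) (a - b) * Rpower k (b * beta * t / k)
          * Rpower (Gamma_k k alpha) b)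
     <= Rpower (Gamma (alpha + beta * t)) a / Rpower (Gamma_k k (alpha + beta * t)) b
     /\
     Rpower (Gamma (alpha + beta * t)) a / Rpower (Gamma_k k (alpha + beta * t)) b
     <= Rpower (alpha + beta) (a - b) * exp ((1 - t) * c) * Rpower (Gamma (alpha + beta)) a
       / (Rpower (alpha + beta * t) (a - b) * Rpower k (b * beta / k * (t - 1))
          * Rpower (Gamma_k k (alpha + beta)) b)).
Proof.
  assert (Hmono : forall s t, 0 <= s -> s <= t ->
                    ln_theta k a b alpha beta s <= ln_theta k a b alpha beta t)
    by (intros; apply ln_theta_nondecreasing; auto).
  split.
  - intros s t Hs Hst. rewrite !theta_exp. apply exp_le_compat, Hmono; lra.
  - intros t Ht. cbv zeta.
    assert (H0 := Hmono 0 t ltac:(lra) ltac:(lra)).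
    assert (H1 := Hmono t 1 ltac:(lra) ltac:(lra)).
    unfold ln_theta in H0, H1. rewrite Rmult_0_r, Rplus_0_r in H0. rewrite Rmult_1_r in H1.
    unfold Rpower. rewrite !exp_mul3_div3, !exp_div.
    split; apply exp_le_compat; nra.
Qed.
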